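(* Let $\mathcal{G}$ be a second countable locally compact Hausdorff étale groupoid with the Fejér property, and let $\mathcal{H}$ be an open subgroupoid of $\mathcal{G}$. If $f\in C_r^*(\mathcal{G})$ satisfies $\operatorname{supp}(f)\subseteq\mathcal{H}$, then $f\in C_r^*(\mathcal{H})$.
   Context: $C_r^*(\mathcal{G})$ is the reduced groupoid $C^*$-algebra; each $f\in C_r^*(\mathcal{G})$ is regarded as a function in $C_0(\mathcal{G})$ via the injective map $j(f)(g)=\langle\delta_g,\pi_{s(g)}(f)\delta_{s(g)}\rangle$, and $\operatorname{supp}(f)=\{\gamma: j(f)(\gamma)\neq0\}$. For an open subgroupoid $\mathcal{H}$, $C_r^*(\mathcal{H})$ is identified with the closure of $C_c(\mathcal{H})$ in $C_r^*(\mathcal{G})$. $\mathcal{G}$ has the Fejér property if there is a net $(h_i)\subset C_c(\mathcal{G})$ with $\|h_if-f\|_r\to0$ for all $f\in C_r^*(\mathcal{G})$ (pointwise product). *)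

From HB Require Import structures.
From mathcomp Require Import all_boot all_order all_algebra.
From mathcomp Require Import all_classical all_reals all_analysis.
From mathcomp.real_closed Require Import complex.
Set Implicit Arguments. Unset Strict Implicit. Unset Printing Implicit Defensive.
Import Order.TTheory GRing.Theory Num.Theory.
Local Open Scope classical_set_scope.
Local Open Scope ring_scope.

(* Groupoid data on a carrier G: source, range, (partial) multiplication and
   inverse. Units are the points of the form [g_s g] (= unit space G^(0)). *)
Record groupoid_ops (G : Type) := GOps {
  g_s : G -> G; g_r : G -> G; g_mul : G -> G -> G; g_inv : G -> G }.

Definition is_groupoid (G : Type) (o : groupoid_ops G) : Prop :=
  let s := g_s o in let r := g_r o in let m := g_mul o in let i := g_inv o in
  [/\ (forall g, s (s g) = s g /\ r (s g) = s g /\ s (r g) = r g /\ r (r g) = r g),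
      (forall g h, s g = r h -> s (m g h) = s h /\ r (m g h) = r g),
      (forall g h k, s g = r h -> s h = r k -> m (m g h) k = m g (m h k)),
      (forall g, m (r g) g = g /\ m g (s g) = g) &
      (forall g, s (i g) = r g /\ r (i g) = s g /\
                 m g (i g) = r g /\ m (i g) g = s g)].

Definition is_topological_groupoid (G : topologicalType) (o : groupoid_ops G)
  : Prop :=
  [/\ is_groupoid o,
      {within [set p : G * G | g_s o p.1 = g_r o p.2],
         continuous (fun p : G * G => g_mul o p.1 p.2)},
      continuous (g_inv o), continuous (g_s o) & continuous (g_r o)].

Definition is_etale_groupoid (G : topologicalType) (o : groupoid_ops G) : Prop :=
  is_topological_groupoid o /\
  forall g : G, exists U : set G,
    [/\ open U, U g, {in U &, injective (g_r o)} &
        (forall V : set G, open V -> V `<=` U -> open (g_r o @` V))].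

Definition is_open_subgroupoid (G : topologicalType) (o : groupoid_ops G)
  (H : set G) : Prop :=
  [/\ open H,
      (forall g h, H g -> H h -> g_s o g = g_r o h -> H (g_mul o g h)) &
      (forall g, H g -> H (g_inv o g))].

Definition cnorm (R : realType) (z : R[i]) : R := ComplexField.Normc.normc z.

Definition Ccont (R : realType) (G : topologicalType) (f : G -> R[i]) : Prop :=
  forall (x : G) (e : R), 0 < e -> \forall y \near x, cnorm (f y - f x) < e.

Definition supp (R : realType) (G : Type) (f : G -> R[i]) : set G :=
  [set g | f g != 0].

Definition is_Cc (R : realType) (G : topologicalType) (f : G -> R[i]) : Prop :=
  Ccont f /\ compact (closure (supp f)).

(* C_c(H), H open, viewed inside C_c(G) by extension by zero *)
Definition is_Cc_in (R : realType) (G : topologicalType) (H : set G)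
  (f : G -> R[i]) : Prop :=
  is_Cc f /\ closure (supp f) `<=` H.

Definition fiber_seq (G : choiceType) (o : groupoid_ops G) (x : G) (bs : seq G)
  : Prop := uniq bs /\ (forall b, b \in bs -> g_s o b = x).

(* ||F||_r <= e, where ||F||_r = sup_x ||pi_x(F)||, computed through the matrix
   coefficients <delta_a, pi_x(F) delta_b> = F(a b^-1) (a, b in G_x) tested on
   finitely supported vectors of norm <= 1 of l^2(G_x). *)
Definition rnorm_le (R : realType) (G : choiceType) (o : groupoid_ops G)
  (F : G -> R[i]) (e : R) : Prop :=
  forall (x : G) (as_ bs : seq G) (d c : G -> R[i]),
    fiber_seq o x as_ -> fiber_seq o x bs ->
    \sum_(a <- as_) cnorm (d a) ^+ 2 <= 1 ->
    \sum_(b <- bs) cnorm (c b) ^+ 2 <= 1 ->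
    cnorm (\sum_(a <- as_) \sum_(b <- bs)
             conjc (d a) * F (g_mul o a (g_inv o b)) * c b) <= e.

(* F belongs to C_r^*(G) (as a function via j): F is a ||.||_r-limit of C_c(G) *)
Definition in_Cr (R : realType) (G : topologicalType) (o : groupoid_ops G)
  (F : G -> R[i]) : Prop :=
  forall e : R, 0 < e ->
    exists f : G -> R[i], is_Cc f /\ rnorm_le o (fun g => F g - f g) e.

(* F belongs to C_r^*(H) = closure of C_c(H) in C_r^*(G) *)
Definition in_Cr_sub (R : realType) (G : topologicalType) (o : groupoid_ops G)
  (H : set G) (F : G -> R[i]) : Prop :=
  forall e : R, 0 < e ->
    exists f : G -> R[i], is_Cc_in H f /\ rnorm_le o (fun g => F g - f g) e.

Definition directed (I : Type) (le : I -> I -> Prop) : Prop :=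
  [/\ (forall i, le i i), (forall i j k, le i j -> le j k -> le i k),
      inhabited I & (forall i j, exists k, le i k /\ le j k)].

Definition fejer (R : realType) (G : topologicalType) (o : groupoid_ops G)
  : Prop :=
  exists (I : Type) (le : I -> I -> Prop) (h : I -> G -> R[i]),
    [/\ directed le, (forall i, is_Cc (h i)) &
        (forall F : G -> R[i], in_Cr o F ->
           forall e : R, 0 < e -> exists i0, forall i, le i0 i ->
             rnorm_le o (fun g => h i g * F g - F g) e)].

(* By the Fejer property, F is within e/2 of h F for some h in C_c(G).  The
   product k = h F is continuous and vanishes off supp h and supp F.  Damping k
   by a continuous weight that is 0 where |k| <= d and 1 where |k| >= 2d yields
   a function of C_c(H): its support closure lies in {|k| >= d}, a closed part
   of the compact closure of supp h contained in supp F, hence in H.  The error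
   is pointwise at most 2d and lives on the compact closure of supp h, which is
   covered by finitely many open bisections; on a bisection the reduced norm is
   bounded by the sup norm (each row and column of the matrix
   (F(a b^-1))_{a,b} has at most one nonzero entry), so the error has reduced
   norm at most 2dN, which is small for d small. *)

From HB Require Import structures.
From mathcomp Require Import all_boot all_order all_algebra.
From mathcomp Require Import all_classical all_reals all_analysis.
From mathcomp.real_closed Require Import complex.
From mathcomp Require Import ring lra.
Set Implicit Arguments. Unset Strict Implicit. Unset Printing Implicit Defensive.
Import Order.TTheory GRing.Theory Num.Theory.
Local Open Scope classical_set_scope.
Local Open Scope ring_scope.

Section ComplexModulus.
Context {R : realType}.
Implicit Types z w : R[i].

Lemma cnorm_ge0 z : 0 <= cnorm z.
Proof. by case: z => a b; rewrite /cnorm /= sqrtr_ge0. Qed.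

Lemma cnormD z w : cnorm (z + w) <= cnorm z + cnorm w.
Proof. exact: le_normcD. Qed.

Lemma cnormM z w : cnorm (z * w) = cnorm z * cnorm w.
Proof. exact: ComplexField.Normc.normcM. Qed.

Lemma cnormN z : cnorm (- z) = cnorm z.
Proof. exact: normcN. Qed.

Lemma cnorm0 : cnorm (0 : R[i]) = 0.
Proof. exact: ComplexField.Normc.normc0. Qed.

Lemma cnorm1 : cnorm (1 : R[i]) = 1.
Proof. exact: ComplexField.Normc.normc1. Qed.

Lemma cnormJ z : cnorm (conjc z) = cnorm z.
Proof. by case: z => a b; rewrite /cnorm /= sqrrN. Qed.

Lemma cnorm_real (x : R) : cnorm (x%:C)%C = `|x|.
Proof. by rewrite /cnorm /= expr0n /= addr0 sqrtr_sqr. Qed.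

Lemma cnormB z w : cnorm (z - w) = cnorm (w - z).
Proof. by rewrite -cnormN opprB. Qed.

Lemma ler_dist_cnorm z w : `|cnorm z - cnorm w| <= cnorm (z - w).
Proof.
have := cnormD (z - w) w; have := cnormD (w - z) z.
rewrite !subrK cnormB ler_norml => h1 h2; apply/andP; split; lra.
Qed.

Lemma cnorm_sum (I : Type) (s : seq I) (f : I -> R[i]) :
  cnorm (\sum_(i <- s) f i) <= \sum_(i <- s) cnorm (f i).
Proof.
elim: s => [|a s IH]; first by rewrite !big_nil cnorm0.
by rewrite !big_cons; apply: le_trans (cnormD _ _) (lerD _ IH).
Qed.

End ComplexModulus.

Section GroupoidAlgebra.
Context {G : Type} {o : groupoid_ops G}.
Hypothesis Hg : is_groupoid o.
Local Notation s := (g_s o).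
Local Notation r := (g_r o).
Local Notation m := (g_mul o).
Local Notation i := (g_inv o).

Lemma gpd_srcK g : s (s g) = s g.
Proof. by case: Hg => + _ _ _ _ => /(_ g) []. Qed.

Lemma gpd_rng_src g : r (s g) = s g.
Proof. by case: Hg => + _ _ _ _ => /(_ g) [_ []]. Qed.

Lemma gpd_src_inv g : s (i g) = r g.
Proof. by case: Hg => _ _ _ _ /(_ g) []. Qed.

Lemma gpd_rng_inv g : r (i g) = s g.
Proof. by case: Hg => _ _ _ _ /(_ g) [_ []]. Qed.

Lemma gpd_mulgV g : m g (i g) = r g.
Proof. by case: Hg => _ _ _ _ /(_ g) [_ [_ []]]. Qed.

Lemma gpd_mulVg g : m (i g) g = s g.
Proof. by case: Hg => _ _ _ _ /(_ g) [_ [_ []]]. Qed.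

Lemma gpd_mul1g g : m (r g) g = g.
Proof. by case: Hg => _ _ _ /(_ g) []. Qed.

Lemma gpd_mulg1 g : m g (s g) = g.
Proof. by case: Hg => _ _ _ /(_ g) []. Qed.

Lemma gpd_mulA g h k : s g = r h -> s h = r k -> m (m g h) k = m g (m h k).
Proof. by case: Hg => _ _ + _ _; apply. Qed.

Lemma gpd_src_mul g h : s g = r h -> s (m g h) = s h.
Proof. by case: Hg => _ + _ _ _ => /[apply] -[]. Qed.

Lemma gpd_rng_mul g h : s g = r h -> r (m g h) = r g.
Proof. by case: Hg => _ + _ _ _ => /[apply] -[]. Qed.

Lemma gpd_inv_src g : i (s g) = s g.
Proof.
have e : r (i (s g)) = s g by rewrite gpd_rng_inv gpd_srcK.
by rewrite -[LHS]gpd_mul1g e gpd_mulgV gpd_rng_src.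
Qed.

Lemma gpd_invK g : i (i g) = g.
Proof.
rewrite -[LHS]gpd_mulg1 gpd_src_inv gpd_rng_inv -gpd_mulVg -gpd_mulA
  ?gpd_src_inv //.
by rewrite gpd_mulVg gpd_src_inv gpd_mul1g.
Qed.

Lemma gpd_rng_quot a b : s a = s b -> r (m a (i b)) = r a.
Proof. by move=> e; rewrite gpd_rng_mul // gpd_rng_inv. Qed.

Lemma gpd_src_quot a b : s a = s b -> s (m a (i b)) = r b.
Proof. by move=> e; rewrite gpd_src_mul ?gpd_rng_inv // gpd_src_inv. Qed.

Lemma gpd_quot_injr a b b' : s a = s b -> s a = s b' ->
  m a (i b) = m a (i b') -> b = b'.
Proof.
have cancel c : s a = s c -> m (i a) (m a (i c)) = i c.
  move=> ec; rewrite -gpd_mulA ?gpd_src_inv ?gpd_rng_inv // gpd_mulVg ec.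
  by rewrite -gpd_rng_inv gpd_mul1g.
move=> e1 e2 E.
by rewrite -[b]gpd_invK -[b']gpd_invK -(cancel _ e1) -(cancel _ e2) E.
Qed.

Lemma gpd_quot_injl a a' b : s a = s b -> s a' = s b ->
  m a (i b) = m a' (i b) -> a = a'.
Proof.
have cancel c : s c = s b -> m (m c (i b)) b = c.
  by move=> ec; rewrite gpd_mulA ?gpd_src_inv ?gpd_rng_inv // gpd_mulVg -ec gpd_mulg1.
by move=> e1 e2 E; rewrite -(cancel _ e1) -(cancel _ e2) E.
Qed.

End GroupoidAlgebra.

Definition bisection {G : Type} (o : groupoid_ops G) (U : set G) : Prop :=
  {in U &, injective (g_r o)} /\ {in U &, injective (g_s o)}.

Section BisectionQuotients.
Context {G : Type} {o : groupoid_ops G}.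
Hypotheses (Hg : is_groupoid o) (U : set G) (U_bis : bisection o U).
Local Notation s := (g_s o).
Local Notation quot a b := (g_mul o a (g_inv o b)).

Lemma bisection_quot_injr a b b' : s a = s b -> s a = s b' ->
  U (quot a b) -> U (quot a b') -> b = b'.
Proof.
move=> e e' Ub Ub'; apply: (gpd_quot_injr Hg e e').
by apply: U_bis.1; rewrite ?in_setE // (gpd_rng_quot Hg e) (gpd_rng_quot Hg e').
Qed.

Lemma bisection_quot_injl a a' b : s a = s b -> s a' = s b ->
  U (quot a b) -> U (quot a' b) -> a = a'.
Proof.
move=> e e' Ua Ua'; apply: (gpd_quot_injl Hg e e').
by apply: U_bis.2; rewrite ?in_setE // (gpd_src_quot Hg e) (gpd_src_quot Hg e').
Qed.

End BisectionQuotients.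

Section SparseSums.
Context {R : realType}.

Lemma sum_indicator_le1 (T : eqType) (P : pred T) (s : seq T) :
  uniq s -> {in s &, forall x y, P x -> P y -> x = y} ->
  \sum_(x <- s) (P x)%:R <= 1 :> R.
Proof.
elim: s => [|a s IH] /=; first by rewrite big_nil.
move=> /andP[a_notin_s s_uniq] P_uniq; rewrite big_cons.
case Pa: (P a); last first.
  by rewrite add0r IH // => x y xs ys; apply: P_uniq; rewrite inE ?xs ?ys orbT.
rewrite big1_seq ?addr0 // => x /andP[_ xs]; case Px: (P x) => //.
by move: a_notin_s; rewrite (P_uniq a x) ?mem_head ?inE ?xs ?orbT.
Qed.

Lemma sum_sparse_mul_le (I J : eqType) (as_ : seq I) (bs : seq J)
    (P : I -> J -> bool) (X : I -> R) (Y : J -> R) :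
  (forall a, a \in as_ -> \sum_(b <- bs) (P a b)%:R <= 1 :> R) ->
  (forall b, b \in bs -> \sum_(a <- as_) (P a b)%:R <= 1 :> R) ->
  \sum_(a <- as_) \sum_(b <- bs) (P a b)%:R * (X a * Y b)
    <= (\sum_(a <- as_) X a ^+ 2 + \sum_(b <- bs) Y b ^+ 2) / 2.
Proof.
move=> rows cols.
have amgm a b : (P a b)%:R * (X a * Y b)
    <= X a ^+ 2 / 2 * (P a b)%:R + Y b ^+ 2 / 2 * (P a b)%:R.
  by have := sqr_ge0 (X a - Y b); case: (P a b); rewrite ?mulr1 ?mulr0 ?mul0r //=; nra.
apply: le_trans (_ : _ <= \sum_(a <- as_) \sum_(b <- bs)
    (X a ^+ 2 / 2 * (P a b)%:R + Y b ^+ 2 / 2 * (P a b)%:R)) _.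
  by apply: ler_sum => a _; apply: ler_sum => b _; apply: amgm.
rewrite mulrDl !mulr_suml; under eq_bigr do rewrite big_split /=.
rewrite big_split /=; apply: lerD.
- rewrite big_seq [leRHS]big_seq; apply: ler_sum => a a_in.
  rewrite -mulr_sumr ler_piMr ?rows // divr_ge0 ?sqr_ge0 //.
- rewrite exchange_big big_seq [leRHS]big_seq; apply: ler_sum => b b_in.
  rewrite -mulr_sumr ler_piMr ?cols // divr_ge0 ?sqr_ge0 //.
Qed.

End SparseSums.

Section ReducedNorm.
Context {R : realType} {G : choiceType} {o : groupoid_ops G}.
Implicit Types F : G -> R[i].

Lemma rnorm_le_ext F F' e : F =1 F' -> rnorm_le o F e -> rnorm_le o F' e.
Proof. by move=> /funext <-. Qed.

Lemma rnorm_le_trans F e e' : e <= e' -> rnorm_le o F e -> rnorm_le o F e'.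
Proof.
move=> le_ee' bound x as_ bs d c ha hb hd hc.
exact: le_trans (bound x as_ bs d c ha hb hd hc) le_ee'.
Qed.

Lemma rnorm_leD F1 F2 e1 e2 :
  rnorm_le o F1 e1 -> rnorm_le o F2 e2 ->
  rnorm_le o (fun g => F1 g + F2 g) (e1 + e2).
Proof.
move=> bound1 bound2 x as_ bs d c ha hb hd hc.
under eq_bigr do under eq_bigr do rewrite mulrDr mulrDl.
under eq_bigr do rewrite big_split /=.
rewrite big_split /=; apply: le_trans (cnormD _ _) _.
by apply: lerD; [exact: bound1 ha hb hd hc|exact: bound2 ha hb hd hc].
Qed.

Lemma rnorm_leN F e : rnorm_le o F e -> rnorm_le o (fun g => - F g) e.
Proof.
move=> bound x as_ bs d c ha hb hd hc.
under eq_bigr do under eq_bigr do rewrite mulrN mulNr.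
by under eq_bigr do rewrite sumrN; rewrite sumrN cnormN; exact: bound ha hb hd hc.
Qed.

Hypothesis Hg : is_groupoid o.

(* Test against the unit vectors at [g] and at the unit [s g] of the fiber
   over [s g]; the matrix coefficient is then [F (g (s g)^-1) = F g]. *)
Lemma rnorm_le_cnorm F e : rnorm_le o F e -> forall g, cnorm (F g) <= e.
Proof.
move=> bound g.
have := bound (g_s o g) [:: g] [:: g_s o g] (fun _ => 1) (fun _ => 1).
rewrite !big_seq1 cnorm1 expr1n conjc1 mul1r mulr1 -{2}(gpd_srcK Hg g).
rewrite gpd_inv_src // gpd_mulg1 //; apply=> //.
- by split=> // b; rewrite inE => /eqP ->.
- by split=> // b; rewrite inE => /eqP ->; rewrite gpd_srcK.
Qed.

Lemma rnorm_le_bisection (U : set G) F M :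
  bisection o U -> (forall g, F g != 0 -> U g) ->
  (forall g, cnorm (F g) <= M) -> rnorm_le o F M.
Proof.
move=> U_bis FU FM x as_ bs d c [as_uniq as_src] [bs_uniq bs_src] d1 c1.
have M0 := le_trans (cnorm_ge0 _) (FM x).
pose P a b := `[< U (g_mul o a (g_inv o b)) >].
have entry a b : cnorm (conjc (d a) * F (g_mul o a (g_inv o b)) * c b)
    <= M * ((P a b)%:R * (cnorm (d a) * cnorm (c b))).
  rewrite !cnormM cnormJ /P.
  have [->|/FU U_ab] := eqVneq (F (g_mul o a (g_inv o b))) 0.
    by rewrite cnorm0 mulr0 mul0r !mulr_ge0 ?cnorm_ge0 ?ler0n.
  by rewrite asboolT // mul1r mulrAC mulrC ler_wpM2r ?mulr_ge0 ?cnorm_ge0.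
have quot_src a b : a \in as_ -> b \in bs -> g_s o a = g_s o b.
  by move=> ain bin; rewrite as_src // bs_src.
apply: le_trans (cnorm_sum _ _) _.
apply: le_trans (_ : \sum_(a <- as_) \sum_(b <- bs)
    M * ((P a b)%:R * (cnorm (d a) * cnorm (c b))) <= _).
  apply: ler_sum => a _; apply: le_trans (cnorm_sum _ _) _.
  by apply: ler_sum => b _; apply: entry.
rewrite -[leRHS]mulr1; under eq_bigr do rewrite -mulr_sumr; rewrite -mulr_sumr.
apply: (ler_wpM2l M0); apply: le_trans
  (sum_sparse_mul_le (fun a => cnorm (d a)) (fun b => cnorm (c b)) _ _) _.
- move=> a ain; apply: sum_indicator_le1 => // b b' bin b'in /asboolP + /asboolP.
  by apply: (bisection_quot_injr Hg U_bis); apply: quot_src.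
- move=> b bin; apply: sum_indicator_le1 => // a a' ain a'in /asboolP + /asboolP.
  by apply: (bisection_quot_injl Hg U_bis); apply: quot_src.
- by rewrite ler_pdivrMr // mul1r; lra.
Qed.

Lemma rnorm_le_bisection_cover (Uf : G -> set G) (gs : seq G) F M :
  (forall g, bisection o (Uf g)) ->
  (forall y, F y != 0 -> exists2 g, g \in gs & Uf g y) ->
  (forall y, cnorm (F y) <= M) -> rnorm_le o F (M * (size gs)%:R).
Proof.
move=> Ubis; elim: gs F => [|g0 gs IH] F Fcover FM.
  rewrite mulr0; apply: (rnorm_le_bisection (U := set0)) => //.
  - by split=> a b /set_mem.
  - by move=> y /Fcover [].
  - by move=> y; have [->|/Fcover []] := eqVneq (F y) 0; rewrite ?cnorm0.
pose F1 y := if `[< Uf g0 y >] then F y else 0.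
pose F2 y := if `[< Uf g0 y >] then 0 else F y.
have bound1 : rnorm_le o F1 M.
  apply: (rnorm_le_bisection (Ubis g0)) => y; rewrite /F1; case: asboolP => //.
  - by rewrite eqxx.
  - by rewrite cnorm0 (le_trans (cnorm_ge0 _) (FM y)).
have bound2 : rnorm_le o F2 (M * (size gs)%:R).
  apply: IH => y; rewrite /F2; case: asboolP => notU; rewrite ?eqxx ?cnorm0 //.
  - move=> /Fcover [g]; rewrite inE => /orP[/eqP -> //|gin] Uy; by exists g.
  - exact: le_trans (cnorm_ge0 _) (FM y).
apply: rnorm_le_ext (rnorm_le_trans _ (rnorm_leD bound1 bound2)).
  by move=> y; rewrite /F1 /F2; case: asboolP; rewrite ?addr0 ?add0r.
by rewrite /= -add1n natrD mulrDr mulr1.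
Qed.

End ReducedNorm.

Section Continuity.
Context {R : realType} {G : topologicalType}.
Implicit Types f k : G -> R[i].

Lemma Ccont_uniform_limit (F : G -> R[i]) :
  (forall e : R, 0 < e -> exists f, Ccont f /\ forall g, cnorm (F g - f g) <= e) ->
  Ccont F.
Proof.
move=> approx x e e0; have e3 : 0 < e / 3 by rewrite divr_gt0.
have [f [f_cont f_near]] := approx _ e3.
apply: filterS (f_cont x _ e3) => y fy.
have -> : F y - F x = (F y - f y) + (f y - f x) + (f x - F x) by ring.
have := cnormD (F y - f y + (f y - f x)) (f x - F x).
have := cnormD (F y - f y) (f y - f x).
have := f_near y; have : cnorm (f x - F x) <= e / 3 by rewrite cnormB.
lra.
Qed.

Lemma CcontM f k : Ccont f -> Ccont k -> Ccont (fun y => f y * k y).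
Proof.
move=> f_cont k_cont x e e0.
pose A := cnorm (f x) + 1; pose B := cnorm (k x) + 1.
have A0 : 0 < A by rewrite ltr_wpDl ?cnorm_ge0.
have B0 : 0 < B by rewrite ltr_wpDl ?cnorm_ge0.
have eA : 0 < e / (3 * A) by rewrite divr_gt0 ?mulr_gt0.
have eB : 0 < e / (3 * B) by rewrite divr_gt0 ?mulr_gt0.
near=> y.
have f1 : cnorm (f y - f x) < 1 by near: y; apply: f_cont.
have fB : cnorm (f y - f x) < e / (3 * B) by near: y; apply: f_cont.
have kA : cnorm (k y - k x) < e / (3 * A) by near: y; apply: k_cont.
have -> : f y * k y - f x * k x = f y * (k y - k x) + (f y - f x) * k x by ring.
apply: le_lt_trans (cnormD _ _) _; rewrite !cnormM.
have fyA : cnorm (f y) <= A.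
  by have := cnormD (f y - f x) (f x); rewrite subrK /A; lra.
have t1 : cnorm (f y) * cnorm (k y - k x) <= A * (e / (3 * A)).
  by apply: ler_pM; rewrite ?cnorm_ge0 // ltW.
have t2 : cnorm (f y - f x) * cnorm (k x) <= e / (3 * B) * B.
  by apply: ler_pM; rewrite ?cnorm_ge0 ?lerDl // ltW.
have E1 : A * (e / (3 * A)) = e / 3 by field; rewrite gt_eqF.
have E2 : e / (3 * B) * B = e / 3 by field; rewrite gt_eqF.
lra.
Unshelve. all: by end_near.
Qed.

Lemma Ccont_lipschitz_cnorm k (phi : R -> R) (L : R) : 0 < L ->
  (forall t u, `|phi t - phi u| <= L * `|t - u|) ->
  Ccont k -> Ccont (fun y => (phi (cnorm (k y)))%:C%C).
Proof.
move=> L0 phi_lip k_cont x e e0.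
apply: filterS (k_cont x _ (divr_gt0 e0 L0)) => y ky.
rewrite -rmorphB cnorm_real; apply: le_lt_trans (phi_lip _ _) _.
rewrite -ltr_pdivlMl // mulrC; apply: le_lt_trans ky.
exact: ler_dist_cnorm.
Qed.

End Continuity.

Definition clamp01 {R : realType} (t : R) : R :=
  if t <= 0 then 0 else if t <= 1 then t else 1.

Section Clamp.
Context {R : realType}.
Implicit Types t u : R.

Lemma clamp01_lipschitz t u : `|clamp01 t - clamp01 u| <= `|t - u|.
Proof.
have := ler_norm (t - u); have := ler_norm (- (t - u)); rewrite normrN.
rewrite ler_norml /clamp01 => n1 n2.
by case: (leP t 0) => ?; case: (leP t 1) => ?; case: (leP u 0) => ?;
  case: (leP u 1) => ?; apply/andP; split; lra.
Qed.

Lemma clamp01_ge0 t : 0 <= clamp01 t.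
Proof. by rewrite /clamp01; case: (leP t 0) => // ?; case: (leP t 1) => // ?; lra. Qed.

Lemma clamp01_le1 t : clamp01 t <= 1.
Proof. by rewrite /clamp01; case: (leP t 0) => // ?; case: (leP t 1). Qed.

Lemma clamp01_ge1 t : 1 <= t -> clamp01 t = 1.
Proof.
by rewrite /clamp01 => ?; case: (leP t 0) => ?; [lra|case: (leP t 1) => ?; lra].
Qed.

Lemma clamp01_neq0 t : clamp01 t != 0 -> 0 < t.
Proof. by rewrite /clamp01; case: (leP t 0); rewrite ?eqxx. Qed.

End Clamp.

Section Cutoff.
Context {R : realType} {G : topologicalType}.
Variables (k : G -> R[i]) (d : R).
Hypotheses (k_cont : Ccont k) (d0 : 0 < d).

Definition cutoff (y : G) : R[i] := k y * (clamp01 (cnorm (k y) / d - 1))%:C%C.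

Lemma Ccont_cutoff : Ccont cutoff.
Proof.
apply: CcontM k_cont (Ccont_lipschitz_cnorm
  (phi := fun t => clamp01 (t / d - 1)) (L := d^-1) _ _ k_cont).
  by rewrite invr_gt0.
move=> t u; apply: le_trans (clamp01_lipschitz _ _) _.
rewrite (_ : t / d - 1 - (u / d - 1) = d^-1 * (t - u)); last by ring.
by rewrite normrM gtr0_norm ?invr_gt0.
Qed.

Lemma closure_supp_cutoff : closure (supp cutoff) `<=` [set y | d <= cnorm (k y)].
Proof.
move=> y cl_y /=; rewrite leNgt; apply/negP => k_small.
have gap : 0 < d - cnorm (k y) by rewrite subr_gt0.
have [z [cut_z near_z]] := cl_y _ (k_cont y gap).
have : 0 < cnorm (k z) / d - 1.
  by apply: clamp01_neq0; move: cut_z; apply: contra_neq => c0; rewrite /cutoff c0 mulr0.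
rewrite subr_gt0 ltr_pdivlMr // mul1r.
by have := cnormD (k z - k y) (k y); rewrite subrK; lra.
Qed.

Lemma cnorm_sub_cutoff y : cnorm (k y - cutoff y) <= 2 * d.
Proof.
rewrite /cutoff; set c := clamp01 _.
have -> : k y - k y * c%:C%C = k y * (1 - c)%:C%C by rewrite rmorphB rmorph1; ring.
rewrite cnormM cnorm_real ger0_norm ?subr_ge0 ?clamp01_le1 //.
have [k_big|k_small] := leP (2 * d) (cnorm (k y)).
  rewrite /c clamp01_ge1; first by rewrite subrr mulr0 mulr_ge0 // ltW.
  by rewrite lerBrDr ler_pdivlMr //; lra.
have := clamp01_ge0 (cnorm (k y) / d - 1); have := cnorm_ge0 (k y); rewrite -/c; nra.
Qed.

Lemma supp_sub_cutoff : supp (fun y => k y - cutoff y) `<=` supp k.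
Proof. by move=> y; apply: contra_neq => /= k0; rewrite /cutoff k0 mul0r subrr. Qed.

Lemma is_Cc_in_cutoff (H : set G) :
  compact (closure (supp k)) -> supp k `<=` H -> is_Cc_in H cutoff.
Proof.
move=> k_cpt k_H.
have cut_k : closure (supp cutoff) `<=` supp k.
  move=> y /closure_supp_cutoff /=; apply: contraTneq => ->; rewrite cnorm0 -ltNge.
  exact: d0.
split; [split|]; first exact: Ccont_cutoff.
- apply: subclosed_compact (@closed_closure _ _) k_cpt _.
  exact: subset_trans cut_k (@subset_closure _ _).
- exact: subset_trans cut_k k_H.
Qed.

End Cutoff.

(* [compact_cover] is only stated for pointed spaces; a point of a nonempty
   compact set supplies the missing structure. *)
Definition pointed_at {T : topologicalType} (x : T) : Type := T.
HB.instance Definition _ (T : topologicalType) (x : T) :=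
  Topological.copy (pointed_at x) T.
HB.instance Definition _ (T : topologicalType) (x : T) :=
  isPointed.Build (pointed_at x) x.

Lemma compact_finite_subcover (T : topologicalType) (Uf : T -> set T) (K : set T) :
  (forall x, open (Uf x)) -> (forall x, Uf x x) -> compact K ->
  exists xs : seq T, forall y, K y -> exists2 x, x \in xs & Uf x y.
Proof.
move=> Uf_open Uf_x K_cpt.
have [[y0 Ky0]|K0] := pselect (exists y, K y); last first.
  by exists [::] => y Ky; exfalso; apply: K0; exists y.
have : @compact (pointed_at y0) K := K_cpt; rewrite compact_cover.
case/(_ T setT Uf (fun x _ => Uf_open x)) => [y _|D _ DK]; first by exists y.
by exists (finmap.enum_fset D) => y /DK [x Dx Uy]; exists x.
Qed.

Section EtaleCovers.
Context {G : topologicalType} {o : groupoid_ops G}.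
Hypothesis etale : is_etale_groupoid o.

Lemma etale_bisection_nbhd g : exists U : set G, [/\ open U, U g & bisection o U].
Proof.
have [[Hg _ inv_cont _ _] r_open] := etale.
have [U [U_open Ug inj_r _]] := r_open g.
have [V [V_open Vg inj_r' _]] := r_open (g_inv o g).
exists (U `&` g_inv o @^-1` V); split.
- by apply: openI => //; apply: open_comp => // y _; apply: inv_cont.
- by [].
- split=> a b /set_mem[Ua Va] /set_mem[Ub Vb] e; first by apply: inj_r; rewrite ?in_setE.
  rewrite -(gpd_invK Hg a) -(gpd_invK Hg b); congr (g_inv o _).
  by apply: inj_r'; rewrite ?in_setE // !(gpd_rng_inv Hg).
Qed.

Lemma etale_compact_bisection_cover (K : set G) : compact K ->
  exists (Uf : G -> set G) (gs : seq G),
    (forall g, bisection o (Uf g)) /\ (forall y, K y -> exists2 g, g \in gs & Uf g y).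
Proof.
move=> K_cpt; have [Uf Uf_spec] := choice etale_bisection_nbhd.
have Uf_open g : open (Uf g) by have [] := Uf_spec g.
have Uf_g g : Uf g g by have [] := Uf_spec g.
have [gs cover] := compact_finite_subcover Uf_open Uf_g K_cpt.
by exists Uf, gs; split=> // g; have [] := Uf_spec g.
Qed.

End EtaleCovers.

Lemma in_Cr_Ccont (R : realType) (G : topologicalType) (o : groupoid_ops G)
    (F : G -> R[i]) :
  is_groupoid o -> in_Cr o F -> Ccont F.
Proof.
move=> Hg F_Cr; apply: Ccont_uniform_limit => e e0.
have [f [[f_cont _] f_near]] := F_Cr e e0.
by exists f; split=> // g; exact: (rnorm_le_cnorm Hg f_near g).
Qed.

Unset Implicit Arguments.

Theorem mainTheorem8 (R : realType) (G : topologicalType) (o : groupoid_ops G) :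
  is_etale_groupoid o -> hausdorff_space G -> locally_compact [set: G] ->
  @second_countable G -> fejer R o ->
  forall H : set G, is_open_subgroupoid o H ->
  forall F : G -> R[i], in_Cr o F -> supp F `<=` H -> in_Cr_sub o H F.
Proof.
move=> etale _ _ _ [I [le [h [[le_refl _ _ _] h_Cc h_fejer]]]] H _ F F_Cr F_H e e0.
have Hg : is_groupoid o by case: etale => [[]].
have [i0 hF_near] : exists i0, rnorm_le o (fun g => h i0 g * F g - F g) (e / 2).
  have [i0 near_i0] := h_fejer F F_Cr (e / 2) (divr_gt0 e0 (ltr0Sn _ 1)).
  by exists i0; apply: near_i0.
have [h_cont h_cpt] := h_Cc i0.
pose k y := h i0 y * F y.
have supp_k y : k y != 0 -> h i0 y != 0 /\ F y != 0.
  by rewrite mulf_eq0 negb_or => /andP.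
have [Uf [gs [Uf_bis gs_cover]]] := etale_compact_bisection_cover etale h_cpt.
pose N : R := (size gs)%:R.
pose d := e / (4 * (N + 1)).
have d0 : 0 < d by rewrite divr_gt0 // mulr_gt0 // ltr_wpDl.
exists (cutoff k d); split.
  have k_cont : Ccont k := CcontM h_cont (in_Cr_Ccont Hg F_Cr).
  apply: (is_Cc_in_cutoff k_cont d0); last by move=> y /supp_k[_ /F_H].
  apply: subclosed_compact (@closed_closure _ _) h_cpt _.
  by apply: closureS => y /supp_k[].
have cut_near : rnorm_le o (fun y => k y - cutoff k d y) (2 * d * N).
  apply: (rnorm_le_bisection_cover Hg Uf_bis) => y; last exact: cnorm_sub_cutoff.
  by move=> /supp_sub_cutoff /supp_k[h_y _]; apply/gs_cover/subset_closure.
apply: rnorm_le_ext (rnorm_le_trans _ (rnorm_leD (rnorm_leN hF_near) cut_near)).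
  by move=> g; rewrite /k; ring.
have : d * (4 * (N + 1)) = e by rewrite /d mulfVK // gt_eqF // mulr_gt0 // ltr_wpDl.
have : 0 <= N by rewrite ler0n.
nra.
Qed.
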